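(* The set of all polynomials of several variables with integer coefficients that have a rational solution (i.e. a zero in $\mathbb Q^n$) is recursive if and only if the set of all polynomials of several variables with integer coefficients that have only finitely many rational solutions is recursively enumerable. Equivalently, the first set is not recursive if and only if the second set is not recursively enumerable.
   Context: Polynomials $D\in\mathbb Z[x_1,\ldots,x_n]$ ($n\ge1$ arbitrary) are coded as natural numbers so that recursiveness and recursive enumerability of sets of them make sense; a rational solution of $D$ is a tuple $(x_1,\ldots,x_n)\in\mathbb Q^n$ with $D(x_1,\ldots,x_n)=0$. *)

From Stdlib Require List.
From HB Require Import structures.
From mathcomp Require Import all_boot all_order all_algebra.
Set Implicit Arguments. Unset Strict Implicit. Unset Printing Implicit Defensive.
Import Order.TTheory GRing.Theory Num.Theory.

Inductive recfun : Type :=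
  | RZero
  | RSucc
  | RProj (i : nat)
  | RComp (f : recfun) (gs : seq recfun)
  | RRec (f g : recfun)
  | RMu (f : recfun).

Inductive reval : recfun -> seq nat -> nat -> Prop :=
  | ev_zero v : reval RZero v 0
  | ev_succ x v : reval RSucc (x :: v) x.+1
  | ev_proj i v : i < size v -> reval (RProj i) v (nth 0 v i)
  | ev_comp f gs v ys y :
      List.Forall2 (fun g y' => reval g v y') gs ys ->
      reval f ys y -> reval (RComp f gs) v y
  | ev_rec0 f g v y : reval f v y -> reval (RRec f g) (0 :: v) y
  | ev_recS f g n v r y :
      reval (RRec f g) (n :: v) r -> reval g (n :: r :: v) y ->
      reval (RRec f g) (n.+1 :: v) y
  | ev_mu f v y :
      reval f (y :: v) 0 ->
      (forall z, z < y -> exists m, reval f (z :: v) m.+1) ->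
      reval (RMu f) v y.

Definition recursive_set (S : nat -> Prop) : Prop :=
  exists f : recfun, forall k,
    (S k /\ reval f [:: k] 1) \/ (~ S k /\ reval f [:: k] 0).

Definition re_set (S : nat -> Prop) : Prop :=
  exists f : recfun, forall k, S k <-> exists y, reval f [:: k] y.

(* polynomial expressions with integer coefficients; variable [PVar i] is x_{i+1} *)
Inductive zpoly : Type :=
  | PVar (i : nat)
  | PConst (c : int)
  | PAdd (p q : zpoly)
  | PMul (p q : zpoly).

Fixpoint zpoly_wf (n : nat) (p : zpoly) : bool :=
  match p with
  | PVar i => i < n
  | PConst _ => true
  | PAdd p q | PMul p q => zpoly_wf n p && zpoly_wf n q
  end.

Fixpoint zpoly_eval (n : nat) (x : n.-tuple rat) (p : zpoly) : rat :=
  match p with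
  | PVar i => nth 0%R x i
  | PConst c => (c%:~R)%R
  | PAdd p q => (zpoly_eval x p + zpoly_eval x q)%R
  | PMul p q => (zpoly_eval x p * zpoly_eval x q)%R
  end.

Definition cpair (a b : nat) : nat := 'C(a + b + 1, 2) + a.

Definition code_int (c : int) : nat :=
  match c with Posz k => k.*2 | Negz k => k.*2.+1 end.

Fixpoint code_zpoly (p : zpoly) : nat :=
  match p with
  | PVar i => 4 * i
  | PConst c => 4 * code_int c + 1
  | PAdd p q => 4 * cpair (code_zpoly p) (code_zpoly q) + 2
  | PMul p q => 4 * cpair (code_zpoly p) (code_zpoly q) + 3
  end.

Definition code_poly (n : nat) (p : zpoly) : nat := cpair n (code_zpoly p).

Definition is_rat_solution (n : nat) (p : zpoly) (x : n.-tuple rat) : Prop :=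
  zpoly_eval x p = 0%R.

Definition has_finitely_many_rat_solutions (n : nat) (p : zpoly) : Prop :=
  exists s : seq (n.-tuple rat), forall x, is_rat_solution p x -> x \in s.

Definition HasRatSol (k : nat) : Prop :=
  exists (n : nat) (p : zpoly),
    [/\ 0 < n, zpoly_wf n p, k = code_poly n p &
        exists x : n.-tuple rat, is_rat_solution p x].

Definition FinRatSol (k : nat) : Prop :=
  exists (n : nat) (p : zpoly),
    [/\ 0 < n, zpoly_wf n p, k = code_poly n p &
        has_finitely_many_rat_solutions n p].

(* If HasRatSol is decidable, then D in Z[x_1..x_n] has only finitely many
   rational solutions iff, for some finite list L of rational points, the polynomial
   D^2 + (P_L(x) x_{n+1} - 1)^2 has no rational solution, where P_L is a sum-of-squares
   product vanishing exactly on L; this is a Sigma-1 condition on the code of D, so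
   FinRatSol is r.e.  Conversely, D has no rational solution iff D, read as a polynomial in
   n+1 variables, has finitely many (one solution gives a whole line of them); so the
   complement of HasRatSol is r.e. when FinRatSol is, and HasRatSol itself is always r.e.
   The computability side rests on the Kleene normal form: the graph of every partial
   recursive function is the projection of the zero set of a total computable function. *)

From mathcomp Require Import all_boot all_order all_algebra.
From Stdlib Require List.
From Stdlib Require Import Classical ClassicalEpsilon.
From mathcomp Require Import zify ring.
Set Implicit Arguments. Unset Strict Implicit. Unset Printing Implicit Defensive.
Import GRing.Theory Num.Theory.

(** * Total computable functions *)

Lemma reval_functional : forall f v y, reval f v y -> forall y', reval f v y' -> y = y'.
Proof.
fix IH 4; intros f v y H.
destruct H; intros y' H'; inversion H'; subst => //.
- have Eys : ys = ys0.
    clear H0 H6 H'; elim: H ys0 H3 => [|g y0 gs0 ys1 Hg _ IHgs] ys0 Hys; inversion Hys => //.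
    by subst; rewrite (IH _ _ _ Hg _ H1) (IHgs _ H3).
  by subst; exact: IH H0 _ H6.
- exact: IH H _ H4.
- by have Er := IH _ _ _ H _ H6; subst; exact: IH H0 _ H7.
- case: (ltngtP y y') => Hyy //.
  + by destruct (H3 _ Hyy) as [m Hm]; have := IH _ _ _ H _ Hm.
  + by destruct (H0 _ Hyy) as [m Hm]; have := IH _ _ _ Hm _ H2.
Qed.

Definition computable (a : nat) (F : seq nat -> nat) :=
  exists f, forall v, size v = a -> reval f v (F v).

Lemma computable_ext a F G :
  (forall v, size v = a -> F v = G v) -> computable a G -> computable a F.
Proof. by move=> E [f Hf]; exists f => v Hv; rewrite E //; exact: Hf. Qed.

Lemma computable_const a c : computable a (fun _ => c).
Proof.
elim: c => [|c [f Hf]]; first by exists RZero => v _; constructor.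
exists (RComp RSucc [:: f]) => v Hv; apply: (@ev_comp _ _ _ [:: c]).
  by constructor; [exact: Hf | constructor].
exact: (ev_succ c [::]).
Qed.

Lemma computable_nth a i : i < a -> computable a (fun v => nth 0 v i).
Proof. by move=> Hi; exists (RProj i) => v Hv; constructor; rewrite Hv. Qed.

Lemma computable_comp a (Fs : seq (seq nat -> nat)) G :
  List.Forall (computable a) Fs -> computable (size Fs) G ->
  computable a (fun v => G (map (fun F => F v) Fs)).
Proof.
move=> HF [g Hg].
have [gs Hgs] : exists gs, List.Forall2
    (fun g F => forall v, size v = a -> reval g v (F v)) gs Fs.
  elim: HF => [|F Fs' [f Hf] _ [gs Hgs]]; first by exists [::].
  by exists (f :: gs); constructor.
exists (RComp g gs) => v Hv; apply: (@ev_comp _ _ _ (map (fun F => F v) Fs)).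
  by elim: Hgs {Hg} => //= g' F gs' Fs' H1 _ IH; constructor; auto.
by apply: Hg; rewrite size_map.
Qed.

Lemma Forall_mem (T : eqType) (P : T -> Prop) (s : seq T) :
  (forall x, x \in s -> P x) -> List.Forall P s.
Proof.
elim: s => // x s IH H; constructor; first exact/H/mem_head.
by apply: IH => y Hy; apply: H; rewrite inE Hy orbT.
Qed.

Lemma Forall_computable_nth a k :
  List.Forall (computable a) (mkseq (fun j v => nth 0 v (k + j)) (a - k)).
Proof.
apply/List.Forall_map; apply: Forall_mem => j; rewrite mem_iota => Hj.
apply: computable_nth; lia.
Qed.

Lemma drop_mkseq_nth (v : seq nat) k :
  drop k v = mkseq (fun j => nth 0 v (k + j)) (size v - k).
Proof.
apply: (@eq_from_nth _ 0); rewrite size_drop ?size_mkseq // => i Hi.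
by rewrite nth_drop nth_mkseq.
Qed.

Lemma computable_subst a m k Hs G :
  size Hs + (a - k) = m -> computable m G -> List.Forall (computable a) Hs ->
  computable a (fun v => G (map (fun H => H v) Hs ++ drop k v)).
Proof.
move=> Em HG HH.
apply: (@computable_ext _ _ (fun v => G (map (fun H => H v)
          (Hs ++ mkseq (fun j v => nth 0 v (k + j)) (a - k))))).
  by move=> v Hv; rewrite map_cat drop_mkseq_nth Hv /mkseq -map_comp.
apply: computable_comp; last by rewrite size_cat size_mkseq Em.
by apply/List.Forall_app; split; last exact: Forall_computable_nth.
Qed.

Lemma computable_comp1 a h F :
  computable 1 (fun v => h (nth 0 v 0)) -> computable a F -> computable a (fun v => h (F v)).
Proof.
move=> Hh HF.
apply: (@computable_ext _ _ (fun v => (fun u => h (nth 0 u 0)) (map (fun H => H v) [:: F]))) => //.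
by apply: (@computable_comp a [:: F] (fun u => h (nth 0 u 0))) => //; constructor.
Qed.

Lemma computable_comp2 a h F G :
  computable 2 (fun v => h (nth 0 v 0) (nth 0 v 1)) -> computable a F -> computable a G ->
  computable a (fun v => h (F v) (G v)).
Proof.
move=> Hh HF HG.
apply: (@computable_ext _ _
  (fun v => (fun u => h (nth 0 u 0) (nth 0 u 1)) (map (fun H => H v) [:: F; G]))) => //.
by apply: (@computable_comp a [:: F; G] (fun u => h (nth 0 u 0) (nth 0 u 1))) => //;
  repeat constructor.
Qed.

(* The same argument layout as [RRec]. *)
Fixpoint primrec (F G : seq nat -> nat) n v :=
  if n is m.+1 then G (m :: primrec F G m v :: v) else F v.

Lemma computable_primrec a N F G :
  computable a N -> computable a F -> computable a.+2 G ->
  computable a (fun v => primrec F G (N v) v).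
Proof.
move=> HN [f Hf] [g Hg].
have HR : computable a.+1 (fun u => primrec F G (head 0 u) (behead u)).
  exists (RRec f g) => -[|n v] //= [Hv].
  elim: n => [|n IH] /=; first by constructor; auto.
  by apply: ev_recS; [exact: IH | apply: Hg => /=; rewrite Hv].
apply: (@computable_ext _ _ (fun v => (fun u => primrec F G (head 0 u) (behead u))
          (map (fun H => H v) [:: N] ++ drop 0 v))); first by move=> v _; rewrite drop0.
by apply: computable_subst HR _; [rewrite subn0 | constructor].
Qed.

Lemma primrec_iter F h n v : primrec F (fun u => h (nth 0 u 1)) n v = iter n h (F v).
Proof. by elim: n => //= n ->. Qed.

Lemma computable_iter a N X h :
  computable a.+2 (fun u => h (nth 0 u 1)) -> computable a N -> computable a X ->
  computable a (fun v => iter (N v) h (X v)).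
Proof.
move=> Hh HN HX.
apply: (@computable_ext _ _ (fun v => primrec X (fun u => h (nth 0 u 1)) (N v) v)).
  by move=> v _; rewrite primrec_iter.
exact: computable_primrec.
Qed.

Lemma computable_S a F : computable a F -> computable a (fun v => (F v).+1).
Proof.
by apply: computable_comp1; exists RSucc => -[|x [|y v]] //= _; exact: (ev_succ x [::]).
Qed.

Lemma computable_primrec1 h (step : nat -> nat -> nat) :
  h 0 = 0 -> (forall n, h n.+1 = step n (h n)) ->
  computable 3 (fun u => step (nth 0 u 0) (nth 0 u 1)) ->
  forall a F, computable a F -> computable a (fun v => h (F v)).
Proof.
move=> h0 hS Hstep a F; apply: computable_comp1.
apply: (@computable_ext _ _ (fun v => primrec (fun _ => 0)
          (fun u => step (nth 0 u 0) (nth 0 u 1)) (nth 0 v 0) v)).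
  by move=> v _; elim: (nth 0 v 0) => //= n IH; rewrite hS IH.
by apply: computable_primrec Hstep; [exact: computable_nth | exact: computable_const].
Qed.

Lemma computable_pred a F : computable a F -> computable a (fun v => (F v).-1).
Proof. by apply: (@computable_primrec1 predn (fun n _ => n)) => //; exact: computable_nth. Qed.

Lemma computable_addn a F G : computable a F -> computable a G -> computable a (fun v => F v + G v).
Proof.
apply: computable_comp2.
apply: (@computable_ext _ _ (fun v => primrec (fun v => nth 0 v 1)
          (fun u => (nth 0 u 1).+1) (nth 0 v 0) v)).
  by move=> v _; elim: (nth 0 v 0) => //= n <-.
apply: computable_primrec; try exact: computable_nth.
exact/computable_S/computable_nth.
Qed.

Lemma computable_double a F : computable a F -> computable a (fun v => (F v).*2).
Proof.
move=> HF; apply: (@computable_ext _ _ (fun v => F v + F v)); first by move=> v _; rewrite addnn.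
by apply: computable_addn.
Qed.

Lemma computable_subn a F G : computable a F -> computable a G -> computable a (fun v => F v - G v).
Proof.
apply: computable_comp2.
apply: (@computable_ext _ _ (fun v => primrec (fun v => nth 0 v 0)
          (fun u => (nth 0 u 1).-1) (nth 0 v 1) v)).
  by move=> v _; elim: (nth 0 v 1) => /= [|n <-]; rewrite ?subn0 ?subnS.
apply: computable_primrec; try exact: computable_nth.
exact/computable_pred/computable_nth.
Qed.

Lemma computable_muln a F G : computable a F -> computable a G -> computable a (fun v => F v * G v).
Proof.
apply: computable_comp2.
apply: (@computable_ext _ _ (fun v => primrec (fun _ => 0)
          (fun u => nth 0 u 1 + nth 0 u 3) (nth 0 v 0) v)).
  by move=> v _; elim: (nth 0 v 0) => //= n <-; rewrite mulSn addnC.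
apply: computable_primrec; [exact: computable_nth | exact: computable_const |].
by apply: computable_addn; exact: computable_nth.
Qed.

Lemma computable_eqn a F G :
  computable a F -> computable a G -> computable a (fun v => F v == G v : nat).
Proof.
move=> HF HG; apply: (@computable_ext _ _ (fun v => 1 - ((F v - G v) + (G v - F v)))).
  by move=> v _; case: (ltngtP (F v) (G v)) => H; lia.
apply: computable_subn; first exact: computable_const.
by apply: computable_addn; exact: computable_subn.
Qed.

Lemma computable_leq a F G :
  computable a F -> computable a G -> computable a (fun v => F v <= G v : nat).
Proof.
move=> HF HG; apply: (@computable_ext _ _ (fun v => 1 - (F v - G v))).
  by move=> v _; case: (leqP (F v) (G v)) => H; lia.
by apply: computable_subn; [exact: computable_const | exact: computable_subn].
Qed.

Lemma computable_andb a (P Q : seq nat -> bool) :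
  computable a (fun v => P v : nat) -> computable a (fun v => Q v : nat) ->
  computable a (fun v => P v && Q v : nat).
Proof.
move=> HP HQ; apply: (@computable_ext _ _ (fun v => P v * Q v)); last exact: computable_muln.
by move=> v _; case: (P v); case: (Q v).
Qed.

Lemma computable_negb a (P : seq nat -> bool) :
  computable a (fun v => P v : nat) -> computable a (fun v => ~~ P v : nat).
Proof.
move=> HP; apply: (@computable_ext _ _ (fun v => 1 - P v)); first by move=> v _; case: (P v).
by apply: computable_subn => //; exact: computable_const.
Qed.

Lemma computable_orb a (P Q : seq nat -> bool) :
  computable a (fun v => P v : nat) -> computable a (fun v => Q v : nat) ->
  computable a (fun v => P v || Q v : nat).
Proof.
move=> HP HQ; apply: (@computable_ext _ _ (fun v => ~~ (~~ P v && ~~ Q v))).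
  by move=> v _; case: (P v); case: (Q v).
by apply/computable_negb/computable_andb; exact: computable_negb.
Qed.

Lemma computable_if a (P : seq nat -> bool) X Y :
  computable a (fun v => P v : nat) -> computable a X -> computable a Y ->
  computable a (fun v => if P v then X v else Y v).
Proof.
move=> HP HX HY; apply: (@computable_ext _ _ (fun v => P v * X v + (1 - P v) * Y v)).
  by move=> v _; case: (P v) => /=; rewrite ?mul1n ?mul0n ?addn0.
apply: computable_addn; apply: computable_muln => //.
by apply: computable_subn => //; exact: computable_const.
Qed.

Ltac computable_hook := fail.

Ltac computable_auto := repeat lazymatch goal with
  | |- computable _ (fun _ => _ + _) => apply: computable_addn
  | |- computable _ (fun _ => _ - _) => apply: computable_subn
  | |- computable _ (fun _ => _ * _) => apply: computable_muln
  | |- computable _ (fun _ => (_).+1) => apply: computable_S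
  | |- computable _ (fun _ => (_).-1) => apply: computable_pred
  | |- computable _ (fun _ => (_).*2) => apply: computable_double
  | |- computable _ (fun _ => if _ then _ else _) => apply: computable_if
  | |- computable _ (fun _ => nat_of_bool (_ == _)) => apply: computable_eqn
  | |- computable _ (fun _ => nat_of_bool (_ <= _)) => apply: computable_leq
  | |- computable _ (fun _ => nat_of_bool (_ && _)) => apply: computable_andb
  | |- computable _ (fun _ => nat_of_bool (_ || _)) => apply: computable_orb
  | |- computable _ (fun _ => nat_of_bool (~~ _)) => apply: computable_negb
  | |- computable _ (fun _ => nth 0 _ _) => apply: computable_nth; done
  | |- computable _ (fun _ => head 0 _) => apply: (@computable_nth _ 0); done
  | |- computable _ (head 0) => apply: (@computable_nth _ 0); done
  | |- computable _ (fun _ => _) => first [assumption | computable_hook | apply: computable_const]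
  | |- computable _ _ => assumption
  end.

(** * Cantor pairing and coded sequences *)

Definition tri s := 'C(s.+1, 2).

Lemma triS s : tri s.+1 = tri s + s.+1.
Proof. by rewrite /tri binS bin1 addnC. Qed.

Lemma leq_tri s : s <= tri s.
Proof. by elim: s => // s IH; rewrite triS; lia. Qed.

Lemma tri_ltn s s' : s < s' -> tri s.+1 <= tri s'.
Proof.
elim: s' => // s' IH; rewrite ltnS leq_eqVlt => /orP [/eqP -> //|/IH H].
by rewrite (triS s'); lia.
Qed.

Lemma computable_tri a F : computable a F -> computable a (fun v => tri (F v)).
Proof.
by apply: (@computable_primrec1 tri (fun n t => t + n.+1)); [|exact: triS|computable_auto].
Qed.

(* [tri_root c] is the index of the diagonal of the Cantor enumeration containing [c]. *)
Fixpoint tri_root c :=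
  if c is c'.+1 then
    if tri (tri_root c').+1 == c'.+1 then (tri_root c').+1 else tri_root c'
  else 0.

Lemma tri_rootP c : tri (tri_root c) <= c < tri (tri_root c).+1.
Proof.
elim: c => // c /andP [H1 H2] /=.
case: eqP => [E|NE]; first by rewrite E leqnn /= triS; lia.
apply/andP; split; first lia.
by move: H2; rewrite leq_eqVlt => /orP [/eqP E|//]; rewrite E in NE.
Qed.

Lemma tri_root_unique c s : tri s <= c < tri s.+1 -> tri_root c = s.
Proof.
move=> /andP [H1 H2]; have /andP [H3 H4] := tri_rootP c.
by case: (ltngtP (tri_root c) s) => // /tri_ltn H; lia.
Qed.

Lemma computable_tri_root a F : computable a F -> computable a (fun v => tri_root (F v)).
Proof.
apply: (@computable_primrec1 tri_root (fun n d => if tri d.+1 == n.+1 then d.+1 else d)) => //.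
by computable_auto; apply: computable_tri; computable_auto.
Qed.

Definition unpair1 c := c - tri (tri_root c).
Definition unpair2 c := tri_root c - unpair1 c.

Lemma cpairE a b : cpair a b = tri (a + b) + a.
Proof. by rewrite /cpair addn1. Qed.

Lemma tri_root_cpair a b : tri_root (cpair a b) = a + b.
Proof. by apply: tri_root_unique; rewrite cpairE triS; lia. Qed.

Lemma unpair1_cpair a b : unpair1 (cpair a b) = a.
Proof. by rewrite /unpair1 tri_root_cpair cpairE; lia. Qed.

Lemma unpair2_cpair a b : unpair2 (cpair a b) = b.
Proof. by rewrite /unpair2 unpair1_cpair tri_root_cpair; lia. Qed.

Lemma cpair_unpair c : cpair (unpair1 c) (unpair2 c) = c.
Proof.
have /andP [H1 H2] := tri_rootP c.
rewrite cpairE /unpair2 /unpair1; rewrite triS in H2.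
have -> : c - tri (tri_root c) + (tri_root c - (c - tri (tri_root c))) = tri_root c by lia.
lia.
Qed.

Lemma leq_cpairl a b : a <= cpair a b. Proof. by rewrite cpairE; lia. Qed.

Lemma leq_cpairr a b : b <= cpair a b.
Proof. by rewrite cpairE; have := leq_tri (a + b); lia. Qed.

Lemma cpair_inj a b a' b' : cpair a b = cpair a' b' -> a = a' /\ b = b'.
Proof.
move=> E; have := congr1 unpair1 E; have := congr1 unpair2 E.
by rewrite !unpair1_cpair !unpair2_cpair.
Qed.

Lemma computable_unpair1 a F : computable a F -> computable a (fun v => unpair1 (F v)).
Proof.
move=> HF; rewrite /unpair1; computable_auto.
by apply: computable_tri; apply: computable_tri_root; computable_auto.
Qed.

Lemma computable_unpair2 a F : computable a F -> computable a (fun v => unpair2 (F v)).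
Proof.
move=> HF; rewrite /unpair2; computable_auto.
  by apply: computable_tri_root; computable_auto.
by apply: computable_unpair1; computable_auto.
Qed.

Lemma computable_cpair a F G :
  computable a F -> computable a G -> computable a (fun v => cpair (F v) (G v)).
Proof.
move=> HF HG; apply: (@computable_ext _ _ (fun v => tri (F v + G v) + F v)).
  by move=> v _; rewrite cpairE.
by computable_auto; apply: computable_tri; computable_auto.
Qed.

Fixpoint code_seq (s : seq nat) : nat :=
  if s is x :: s' then (cpair x (code_seq s')).+1 else 0.

Definition code_head c := unpair1 c.-1.
Definition code_behead c := unpair2 c.-1.
Definition code_nth i c := code_head (iter i code_behead c).

Lemma code_nth_seq i s : code_nth i (code_seq s) = nth 0 s i.
Proof.
have Iter0 j : iter j code_behead 0 = 0 by elim: j => //= j ->.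
rewrite /code_nth; elim: s i => [|x s IH] [|i] //=.
- by rewrite Iter0.
- by rewrite /code_head -pred_Sn unpair1_cpair.
- by rewrite -iterS iterSr {2}/code_behead -pred_Sn unpair2_cpair IH.
Qed.

Lemma size_code_seq s : size s <= code_seq s.
Proof. by elim: s => //= x s IH; have := leq_cpairr x (code_seq s); lia. Qed.

Lemma computable_code_nth a I C :
  computable a I -> computable a C -> computable a (fun v => code_nth (I v) (C v)).
Proof.
move=> HI HC; rewrite /code_nth /code_head; apply: computable_unpair1; computable_auto.
apply: computable_iter => //; rewrite /code_behead.
by apply: computable_unpair2; computable_auto.
Qed.

Ltac computable_hook ::= lazymatch goal with
  | |- computable _ (fun _ => code_nth _ _) => apply: computable_code_nth
  | |- computable _ (fun _ => cpair _ _) => apply: computable_cpair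
  | |- computable _ (fun _ => unpair1 _) => apply: computable_unpair1
  | |- computable _ (fun _ => unpair2 _) => apply: computable_unpair2
  | |- computable _ (fun _ => tri _) => apply: computable_tri
  end.

(** * Sigma-1 relations *)

Lemma computable_behead a F : computable a F -> computable a.+1 (fun u => F (behead u)).
Proof.
move=> HF; apply: (@computable_ext _ _ (fun u => F (map (fun H => H u) [::] ++ drop 1 u))).
  by move=> u _; rewrite drop1.
by apply: (@computable_subst a.+1 a 1 [::] F) => //; rewrite subn1.
Qed.

Lemma computable_subst_head a G H :
  computable a.+1 G -> computable a.+1 H -> computable a.+1 (fun u => G (H u :: behead u)).
Proof.
move=> HG HH; apply: (@computable_ext _ _ (fun u => G (map (fun H => H u) [:: H] ++ drop 1 u))).
  by move=> u _; rewrite drop1.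
by apply: (@computable_subst a.+1 a.+1 1 [:: H] G) => //; [rewrite subn1 | constructor].
Qed.

Definition sigma1 a (P : seq nat -> Prop) := exists R, computable a.+1 R /\
  forall v, size v = a -> (P v <-> exists w, R (w :: v) = 0).

Lemma sigma1_ext a (P Q : seq nat -> Prop) :
  (forall v, size v = a -> (P v <-> Q v)) -> sigma1 a Q -> sigma1 a P.
Proof. by move=> E [R [HR HQ]]; exists R; split => // v Hv; rewrite E //; exact: HQ. Qed.

Lemma sigma1_computable a (P : seq nat -> Prop) R :
  computable a R -> (forall v, size v = a -> (P v <-> R v = 0)) -> sigma1 a P.
Proof.
move=> HR HP; exists (fun u => R (behead u)); split; first exact: computable_behead.
by move=> v Hv; rewrite HP //; split => [H|[]//]; exists 0.
Qed.

Lemma sigma1_bool a (P : seq nat -> Prop) (b : seq nat -> bool) :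
  computable a (fun v => b v : nat) -> (forall v, size v = a -> (P v <-> b v)) -> sigma1 a P.
Proof.
move=> Hb HP; apply: (@sigma1_computable _ _ (fun v => ~~ b v : nat)).
  exact: computable_negb.
by move=> v Hv; rewrite HP //; case: (b v).
Qed.

(* Two witnesses are packed into one with the Cantor pairing. *)
Lemma sigma1_and a P Q : sigma1 a P -> sigma1 a Q -> sigma1 a (fun v => P v /\ Q v).
Proof.
move=> [R1 [H1 E1]] [R2 [H2 E2]].
exists (fun u => R1 (unpair1 (head 0 u) :: behead u) + R2 (unpair2 (head 0 u) :: behead u)).
split; first by apply: computable_addn; apply: computable_subst_head => //; computable_auto.
move=> v Hv; rewrite E1 // E2 //; split.
  move=> [[w1 Hw1] [w2 Hw2]]; exists (cpair w1 w2) => /=.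
  by rewrite unpair1_cpair unpair2_cpair Hw1 Hw2.
by move=> [w /= Hw]; split; [exists (unpair1 w) | exists (unpair2 w)]; lia.
Qed.

Lemma sigma1_or a P Q : sigma1 a P -> sigma1 a Q -> sigma1 a (fun v => P v \/ Q v).
Proof.
move=> [R1 [H1 E1]] [R2 [H2 E2]].
exists (fun u => R1 (unpair1 (head 0 u) :: behead u) * R2 (unpair2 (head 0 u) :: behead u)).
split; first by apply: computable_muln; apply: computable_subst_head => //; computable_auto.
move=> v Hv; rewrite E1 // E2 //; split.
  move=> [[w1 Hw1]|[w2 Hw2]].
    by exists (cpair w1 0) => /=; rewrite unpair1_cpair unpair2_cpair Hw1.
  by exists (cpair 0 w2) => /=; rewrite unpair1_cpair unpair2_cpair Hw2 muln0.
move=> [w /= /eqP]; rewrite muln_eq0 => /orP [/eqP H|/eqP H]; [left|right]; eexists; exact: H.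
Qed.

Lemma sigma1_exists a P : sigma1 a.+1 P -> sigma1 a (fun v => exists x, P (x :: v)).
Proof.
move=> [R [HR E]].
exists (fun u => R (map (fun H => H u)
          [:: fun u => unpair2 (head 0 u); fun u => unpair1 (head 0 u)] ++ drop 1 u)).
split.
  apply: (@computable_subst a.+1 a.+2 1) => //; first by rewrite subn1.
  by constructor; [computable_auto | constructor; [computable_auto | constructor]].
move=> v Hv; split.
  move=> [x /E]; rewrite /= Hv => -[] // w Hw; exists (cpair x w) => /=.
  by rewrite drop0 unpair1_cpair unpair2_cpair.
move=> [w /= Hw]; exists (unpair1 w); apply/E; first by rewrite /= Hv.
by exists (unpair2 w); rewrite drop0 in Hw.
Qed.

Lemma sigma1_subst a m P Hs : sigma1 m P -> List.Forall (computable a) Hs -> size Hs = m ->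
  sigma1 a (fun v => P (map (fun H => H v) Hs)).
Proof.
move=> [R [HR E]] HH Hm.
exists (fun u => R (map (fun F => F u)
          ((fun u => nth 0 u 0) :: map (fun H u => H (behead u)) Hs))).
split.
  apply: computable_comp; last by rewrite /= size_map Hm.
  constructor; first computable_auto.
  apply/List.Forall_map; elim: HH => // H Hs' H1 _ IH.
  by constructor => //; exact: computable_behead.
move=> v Hv; rewrite E ?size_map //=.
have Em w : [seq F (w :: v) | F <- [seq (fun u => H (behead u)) | H <- Hs]] = [seq H v | H <- Hs].
  by elim: (Hs) => //= H Hs' ->.
by split => -[w Hw]; exists w; rewrite ?Em in Hw *.
Qed.

Lemma sigma1_subst_drop a m k P Hs :
  sigma1 m P -> List.Forall (computable a) Hs -> size Hs + (a - k) = m ->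
  sigma1 a (fun v => P (map (fun H => H v) Hs ++ drop k v)).
Proof.
move=> HP HH Hm.
apply: (sigma1_ext _ (@sigma1_subst a m P
          (Hs ++ mkseq (fun j v => nth 0 v (k + j)) (a - k)) HP _ _)).
- by move=> v Hv; rewrite map_cat drop_mkseq_nth Hv /mkseq -map_comp.
- by apply/List.Forall_app; split; last exact: Forall_computable_nth.
- by rewrite size_cat size_mkseq.
Qed.

Lemma primrec_sum K n v :
  primrec (fun _ => 0) (fun u => nth 0 u 1 + K (nth 0 u 0) (drop 2 u)) n v = \sum_(z < n) K z v.
Proof. by elim: n => [|n IH]; rewrite ?big_ord0 // big_ord_recr /= IH drop0. Qed.

Lemma sum_nat_eq0P n (F : nat -> nat) : \sum_(z < n) F z = 0 <-> forall z, z < n -> F z = 0.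
Proof.
split => [/eqP|H]; last by apply/eqP; rewrite sum_nat_eq0; apply/forallP => z; rewrite H.
by rewrite sum_nat_eq0 => /forallP H z Hz; apply/eqP; exact: (H (Ordinal Hz)).
Qed.

(* The witness for a bounded universal quantifier is the code of the list of witnesses. *)
Lemma sigma1_bounded_forall a P B : sigma1 a.+1 P -> computable a B ->
  sigma1 a (fun v => forall z, z < B v -> P (z :: v)).
Proof.
move=> [R [HR E]] HB.
pose K z u := R (code_nth z (head 0 u) :: z :: behead u).
exists (fun u => primrec (fun _ => 0)
          (fun u => nth 0 u 1 + K (nth 0 u 0) (drop 2 u)) (B (behead u)) u).
split.
  apply: computable_primrec; [exact: computable_behead | computable_auto |].
  apply: computable_addn; first computable_auto.
  apply: (@computable_ext _ _ (fun u => R (map (fun H => H u)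
            [:: fun u => code_nth (nth 0 u 0) (nth 0 u 2); fun u => nth 0 u 0] ++ drop 3 u))).
    by move=> [|x [|y [|z u]]] //= _; rewrite /K /= drop0.
  apply: computable_subst HR _; first by rewrite subSS subSS subSS subn0.
  by constructor; [computable_auto | constructor; [computable_auto | constructor]].
move=> v Hv; split.
  move=> H.
  have [s Hs] : exists s, forall z, z < B v -> R (nth 0 s z :: z :: v) = 0.
    elim: (B v) H => [|n IH] H; first by exists [::].
    have [s Hs] := IH (fun z Hz => H z (ltnW Hz)).
    have [w Hw] : exists w, R (w :: n :: v) = 0 by have := H n (ltnSn n); rewrite E /= ?Hv.
    exists (mkseq (fun z => if z < n then nth 0 s z else w) n.+1) => z Hz.
    rewrite nth_mkseq //; case: ifP => Hzn; first exact: Hs.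
    by have -> : z = n by lia.
  exists (code_seq s) => /=; rewrite primrec_sum; apply/(sum_nat_eq0P _ (K^~ _)) => z Hz.
  by rewrite /K /= code_nth_seq Hs.
move=> [W /=]; rewrite primrec_sum => /(sum_nat_eq0P _ (K^~ _)) H z Hz.
apply/E; first by rewrite /= Hv.
by exists (code_nth z W); exact: H.
Qed.

Lemma sigma1_forall_lt b (Ps : nat -> seq nat -> Prop) m :
  (forall j, j < m -> sigma1 b (Ps j)) -> sigma1 b (fun u => forall j, j < m -> Ps j u).
Proof.
elim: m => [|m IH] H.
  by apply: (@sigma1_computable _ _ (fun _ => 0)); [computable_auto | move=> v _; split => // _ j].
apply: (@sigma1_ext _ _ (fun u => (forall j, j < m -> Ps j u) /\ Ps m u)).
  move=> v _; split; first by move=> Hj; split => [j Hjm|]; apply: Hj; lia.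
  by move=> [H1 H2] j; rewrite ltnS leq_eqVlt => /orP [/eqP -> //|]; exact: H1.
by apply: sigma1_and; [apply: IH => j Hj; apply: H; lia | exact: H].
Qed.

Lemma reval_RMu_exists r R v : (forall w, reval r (w :: v) (R (w :: v))) ->
  (exists w, R (w :: v) = 0) -> exists2 t, reval (RMu r) v t & R (t :: v) = 0.
Proof.
move=> Hr Hex.
have Hex' : exists w, R (w :: v) == 0 by case: Hex => w Hw; exists w; apply/eqP.
case: (ex_minnP Hex') => t /eqP Ht Hmin; exists t => //.
constructor; first by rewrite -Ht; exact: Hr.
move=> z Hz; exists (R (z :: v)).-1.
have Hnz : R (z :: v) != 0 by apply/negP => /Hmin; rewrite leqNgt Hz.
by rewrite prednK ?lt0n //; exact: Hr.
Qed.

Lemma re_set_of_sigma1 (P : nat -> Prop) : sigma1 1 (fun v => P (head 0 v)) -> re_set P.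
Proof.
move=> [R [[r Hr] E]]; exists (RMu r) => k.
rewrite (E [:: k] erefl) /=; split.
  move=> Hex; have [t Ht _] := @reval_RMu_exists r R [:: k] (fun w => Hr [:: w; k] erefl) Hex.
  by exists t.
move=> [y Hy]; inversion Hy; subst; exists y.
by have := reval_functional H0 (Hr [:: y; k] erefl).
Qed.

(* Search simultaneously for a witness of [S k] and for one of its negation. *)
Lemma recursive_set_of_sigma1 (S : nat -> Prop) :
  sigma1 1 (fun v => S (head 0 v)) -> sigma1 1 (fun v => ~ S (head 0 v)) -> recursive_set S.
Proof.
move=> [R1 [H1 E1]] [R2 [H2 E2]].
have [m Hm] : computable 2 (fun u => R1 u * R2 u) by computable_auto.
have [e He] : computable 2 (fun u => R1 u == 0 : nat) by computable_auto.
exists (RComp e [:: RMu m; RProj 0]) => k.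
have [t Hmt Ht] : exists2 t, reval (RMu m) [:: k] t & R1 [:: t; k] * R2 [:: t; k] = 0.
  apply: (@reval_RMu_exists m (fun u => R1 u * R2 u)) => [w|]; first exact: Hm.
  case: (classic (S k)) => HS.
    by have [w Hw] := proj1 (E1 [:: k] erefl) HS; exists w; rewrite /= Hw.
  by have [w Hw] := proj1 (E2 [:: k] erefl) HS; exists w; rewrite /= Hw muln0.
have Hev : reval (RComp e [:: RMu m; RProj 0]) [:: k] (R1 [:: t; k] == 0).
  apply: (@ev_comp _ _ _ [:: t; k]); last exact: (He [:: t; k] erefl).
  by constructor => //; constructor; [exact: (@ev_proj 0 [:: k]) | constructor].
case: eqP Hev => HR1 Hev.
  by left; split => //; apply/(E1 [:: k] erefl); exists t.
right; split => //; apply/(E2 [:: k] erefl); exists t.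
by move/eqP: Ht; rewrite muln_eq0 => /orP [/eqP|/eqP].
Qed.

(** * Kleene normal form: graphs of partial recursive functions are Sigma-1 *)

Definition graph_sigma1 f := forall a, sigma1 a.+1 (fun u => reval f (behead u) (head 0 u)).

Lemma recfun_nested_ind (P : recfun -> Prop) :
  P RZero -> P RSucc -> (forall i, P (RProj i)) ->
  (forall f gs, P f -> List.Forall P gs -> P (RComp f gs)) ->
  (forall f g, P f -> P g -> P (RRec f g)) -> (forall f, P f -> P (RMu f)) -> forall f, P f.
Proof.
move=> H0 H1 H2 H3 H4 H5; fix IH 1 => -[||i|f gs|f g|f].
- exact: H0.
- exact: H1.
- exact: H2.
- apply: H3; first exact: IH.
  by elim: gs => [|g gs IHgs]; constructor; [exact: IH | exact: IHgs].
- by apply: H4; exact: IH.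
- by apply: H5; exact: IH.
Qed.

Lemma Forall_nth (T : Type) (P : T -> Prop) (d : T) s j :
  List.Forall P s -> j < size s -> P (nth d s j).
Proof. by move=> H; elim: H j => //= x s' Hx _ IH [|j] //= /IH. Qed.

Lemma mkseq_cons (T : Type) (F : nat -> T) n : mkseq F n.+1 = F 0 :: mkseq (fun j => F j.+1) n.
Proof. by rewrite /mkseq /= -[1]addn0 iotaDl -map_comp. Qed.

Lemma Forall2_mkseq (T : Type) (d : T) (Q : T -> nat -> Prop) gs F :
  (forall j, j < size gs -> Q (nth d gs j) (F j)) -> List.Forall2 Q gs (mkseq F (size gs)).
Proof.
elim: gs F => [|g gs IH] F H /=; first by constructor.
by rewrite mkseq_cons; constructor; [exact: (H 0) | apply: IH => j; exact: (H j.+1)].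
Qed.

Lemma Forall2_nth (T : Type) (d : T) (Q : T -> nat -> Prop) gs ys : List.Forall2 Q gs ys ->
  size ys = size gs /\ forall j, j < size gs -> Q (nth d gs j) (nth 0 ys j).
Proof. by elim=> //= g y gs' ys' Hq _ [-> IH]; split => // -[|j] //= /IH. Qed.

Lemma graph_sigma1_RZero : graph_sigma1 RZero.
Proof.
move=> a; apply: (@sigma1_bool _ _ (fun u => head 0 u == 0)); first computable_auto.
move=> [|y v] //= _; split; first by move=> H; inversion H.
by move/eqP ->; constructor.
Qed.

Lemma graph_sigma1_RSucc : graph_sigma1 RSucc.
Proof.
case=> [|b].
  apply: (@sigma1_bool _ _ (fun _ => false)); first computable_auto.
  by move=> [|y [|x v]] //= _; split => // H; inversion H.
apply: (@sigma1_bool _ _ (fun u => head 0 u == (nth 0 u 1).+1)); first computable_auto.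
move=> [|y [|x v]] //= _; split; first by move=> H; inversion H.
by move/eqP ->; constructor.
Qed.

Lemma graph_sigma1_RProj i : graph_sigma1 (RProj i).
Proof.
move=> a; case: (ltnP i a) => Hi.
  apply: (@sigma1_bool _ _ (fun u => head 0 u == nth 0 u i.+1)); first computable_auto.
  move=> [|y v] //= [Hv]; split; first by move=> H; inversion H; subst.
  by move/eqP ->; constructor; lia.
apply: (@sigma1_bool _ _ (fun _ => false)); first computable_auto.
by move=> [|y v] //= [Hv]; split => // H; inversion H; lia.
Qed.

(* The witness codes the list of intermediate values [g_j v]. *)
Lemma graph_sigma1_RComp f gs :
  graph_sigma1 f -> List.Forall graph_sigma1 gs -> graph_sigma1 (RComp f gs).
Proof.
move=> Hf Hgs a; set m := size gs.
pose P w := (forall j, j < m ->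
                reval (nth RZero gs j) (behead (behead w)) (code_nth j (head 0 w))) /\
            reval f (mkseq (fun j => code_nth j (head 0 w)) m) (nth 0 w 1).
apply: (@sigma1_ext _ _ (fun u => exists Y, P (Y :: u))); last apply/sigma1_exists/sigma1_and.
- move=> [|y v] //= [Hv]; rewrite /P /=; split.
    move=> H; inversion H; subst.
    have [Hsz Hj] := Forall2_nth RZero H2.
    exists (code_seq ys); split; first by move=> j Hjm; rewrite code_nth_seq; exact: Hj.
    by rewrite (eq_mkseq (g := nth 0 ys) (fun j => code_nth_seq j ys)) /m -Hsz mkseq_nth.
  move=> [Y [H1 H2]]; apply: (@ev_comp _ _ _ (mkseq (fun j => code_nth j Y) m)) => //.
  exact: (@Forall2_mkseq _ RZero (fun g => reval g v)).
- apply: sigma1_forall_lt => j Hj.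
  have Hg := Forall_nth RZero Hgs Hj a.
  apply: (sigma1_ext _ (@sigma1_subst_drop a.+2 a.+1 2 _
          [:: fun w => code_nth j (head 0 w)] Hg _ _)).
  + by move=> [|x [|y v]] //=; rewrite drop0.
  + by constructor; [computable_auto | constructor].
  + by rewrite /= add1n subn2.
- apply: (sigma1_ext _ (@sigma1_subst_drop a.+2 m.+1 a.+2 _
          ((fun w => nth 0 w 1) :: mkseq (fun j w => code_nth j (head 0 w)) m) (Hf m) _ _)).
  + by move=> w Hw /=; rewrite drop_oversize ?Hw // cats0 /mkseq -map_comp.
  + constructor; first computable_auto.
    by apply/List.Forall_map; apply: Forall_mem => j _; computable_auto.
  + by rewrite /= size_mkseq subnn addn0.
Qed.

Lemma reval_RRecP f g n v y : reval (RRec f g) (n :: v) y <->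
  exists h : nat -> nat, [/\ reval f v (h 0),
    (forall i, i < n -> reval g (i :: h i :: v) (h i.+1)) & y = h n].
Proof.
split.
  elim: n y => [|n IH] y H; inversion H; subst; first by exists (fun _ => y).
  have [h [H1 H2 H3]] := IH _ H5.
  exists (fun i => if i <= n then h i else y); split => //; last by rewrite ltnn.
  move=> i Hi; have -> : i <= n by lia.
  case: (ltnP i n) => Hl; first exact: H2.
  have Ei : i = n by lia.
  by subst i; rewrite -H3.
move=> [h [H1 H2 ->]]; elim: n H2 => [|n IH] H2; first by constructor.
by apply: ev_recS; [apply: IH => i Hi; apply: H2; lia | exact: H2].
Qed.

(* The witness codes the whole table [h 0, ..., h n] of the recursion. *)
Lemma graph_sigma1_RRec f g : graph_sigma1 f -> graph_sigma1 g -> graph_sigma1 (RRec f g).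
Proof.
move=> Hf Hg [|b].
  apply: (@sigma1_bool _ _ (fun _ => false)); first computable_auto.
  by move=> [|y [|x v]] //= _; split => // H; inversion H.
pose P w := (reval f (drop 3 w) (code_nth 0 (head 0 w)) /\
   (forall i, i < nth 0 w 2 ->
      reval g (i :: code_nth i (head 0 w) :: drop 3 w) (code_nth i.+1 (head 0 w)))) /\
   nth 0 w 1 = code_nth (nth 0 w 2) (head 0 w).
apply: (@sigma1_ext _ _ (fun u => exists S, P (S :: u))); last apply/sigma1_exists.
  move=> [|y [|n v]] //= _; rewrite reval_RRecP /P /= drop0; split.
    move=> [h [H1 H2 H3]]; exists (code_seq (mkseq h n.+1)).
    rewrite !code_nth_seq !nth_mkseq //; do 2?split => //.
    by move=> i Hi; rewrite !code_nth_seq !nth_mkseq; [exact: H2 | lia | lia].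
  by move=> [S [[H1 H2] H3]]; exists (fun i => code_nth i S).
apply/sigma1_and; first apply/sigma1_and.
- apply: (sigma1_ext _ (@sigma1_subst_drop b.+3 b.+1 3 _
          [:: fun w => code_nth 0 (head 0 w)] (Hf b) _ _)) => //.
  + by constructor; [computable_auto | constructor].
  + by rewrite /= add1n subSS subSS subSS subn0.
- apply: (@sigma1_bounded_forall _ (fun x => reval g
    (nth 0 x 0 :: code_nth (nth 0 x 0) (nth 0 x 1) :: drop 4 x)
    (code_nth (nth 0 x 0).+1 (nth 0 x 1)))); last computable_auto.
  apply: (sigma1_ext _ (@sigma1_subst_drop b.+4 b.+3 4 _
     [:: fun x => code_nth (nth 0 x 0).+1 (nth 0 x 1); fun x => nth 0 x 0;
         fun x => code_nth (nth 0 x 0) (nth 0 x 1)] (Hg b.+2) _ _)) => //.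
  + by do 3 (constructor; first computable_auto); constructor.
  + by rewrite /= subSS subSS subSS subSS subn0.
- apply: (@sigma1_bool _ _ (fun w => nth 0 w 1 == code_nth (nth 0 w 2) (head 0 w))).
    computable_auto.
  by move=> w _; split => [->|/eqP].
Qed.

Lemma graph_sigma1_RMu f : graph_sigma1 f -> graph_sigma1 (RMu f).
Proof.
move=> Hf a.
apply: (@sigma1_ext _ _ (fun u => reval f (head 0 u :: behead u) 0 /\
   (forall z, z < head 0 u -> exists m, reval f (z :: behead u) m.+1))).
  move=> [|y v] //= _; split; first by move=> H; inversion H.
  by move=> [H1 H2]; constructor.
apply: sigma1_and.
- apply: (sigma1_ext _ (@sigma1_subst_drop a.+1 a.+2 1 _
          [:: fun _ => 0; fun u => head 0 u] (Hf a.+1) _ _)).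
  + by move=> [|y v] //= _; rewrite drop0.
  + by constructor; [computable_auto | constructor; [computable_auto | constructor]].
  + by rewrite /= subn1.
- apply: (@sigma1_ext _ _ (fun u => forall z, z < head 0 u ->
     (fun x => exists m, reval f (nth 0 x 0 :: drop 2 x) m.+1) (z :: u))).
    by move=> [|y v] //= _; rewrite drop0.
  apply: (@sigma1_bounded_forall _ (fun x => exists m, reval f (nth 0 x 0 :: drop 2 x) m.+1));
    last computable_auto.
  apply: (@sigma1_ext _ _ (fun x => exists m,
    (fun x' => reval f (nth 0 x' 1 :: drop 3 x') (nth 0 x' 0).+1) (m :: x))).
    by move=> [|z [|y v]].
  apply: (@sigma1_exists _ (fun x' => reval f (nth 0 x' 1 :: drop 3 x') (nth 0 x' 0).+1)).
  apply: (sigma1_ext _ (@sigma1_subst_drop a.+3 a.+2 3 _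
          [:: fun x => (nth 0 x 0).+1; fun x => nth 0 x 1] (Hf a.+1) _ _)) => //.
  + by constructor; [computable_auto | constructor; [computable_auto | constructor]].
  + by rewrite /= subSS subSS subSS subn0.
Qed.

Theorem graph_sigma1_recfun f : graph_sigma1 f.
Proof.
elim/recfun_nested_ind: f.
- exact: graph_sigma1_RZero.
- exact: graph_sigma1_RSucc.
- exact: graph_sigma1_RProj.
- by move=> f gs; exact: graph_sigma1_RComp.
- by move=> f g; exact: graph_sigma1_RRec.
- by move=> f; exact: graph_sigma1_RMu.
Qed.

Lemma sigma1_of_re_set (P : nat -> Prop) : re_set P -> sigma1 1 (fun v => P (head 0 v)).
Proof.
move=> [f Hf].
apply: (@sigma1_ext _ _ (fun v => exists y, reval f [:: head 0 v] y)).
  by move=> [|k [|x v]] //= _; rewrite Hf.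
apply: (@sigma1_exists _ (fun u => reval f [:: nth 0 u 1] (head 0 u))).
apply: (sigma1_ext _ (@sigma1_subst_drop 2 2 1 _
          [:: fun u => nth 0 u 0] (graph_sigma1_recfun f 1) _ _)) => //.
- by move=> [|y [|k [|x v]]].
- by constructor; [computable_auto | constructor].
Qed.

(** * Coded rationals and evaluation of coded polynomials *)

(* [qcode p q d] codes the rational number [(p - q) / d], for [0 < d]. *)
Definition qcode p q d := cpair (cpair p q) d.-1.
Definition qcode_pos r := unpair1 (unpair1 r).
Definition qcode_neg r := unpair2 (unpair1 r).
Definition qcode_den r := (unpair2 r).+1.
Definition rat_of_qcode (r : nat) : rat :=
  (((qcode_pos r)%:R - (qcode_neg r)%:R) / (qcode_den r)%:R)%R.

Lemma rat_of_qcodeE p q d : 0 < d -> rat_of_qcode (qcode p q d) = ((p%:R - q%:R) / d%:R)%R.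
Proof.
move=> Hd; rewrite /rat_of_qcode /qcode_pos /qcode_neg /qcode_den /qcode.
by rewrite !unpair1_cpair !unpair2_cpair prednK.
Qed.

Definition qcode_add r1 r2 :=
  qcode (qcode_pos r1 * qcode_den r2 + qcode_pos r2 * qcode_den r1)
        (qcode_neg r1 * qcode_den r2 + qcode_neg r2 * qcode_den r1)
        (qcode_den r1 * qcode_den r2).

Definition qcode_mul r1 r2 :=
  qcode (qcode_pos r1 * qcode_pos r2 + qcode_neg r1 * qcode_neg r2)
        (qcode_pos r1 * qcode_neg r2 + qcode_neg r1 * qcode_pos r2)
        (qcode_den r1 * qcode_den r2).

Lemma qcode_den_neq0 r : ((qcode_den r)%:R : rat) != 0%R.
Proof. by rewrite pnatr_eq0. Qed.

Lemma rat_of_qcode_add r1 r2 :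
  rat_of_qcode (qcode_add r1 r2) = (rat_of_qcode r1 + rat_of_qcode r2)%R.
Proof.
rewrite /qcode_add rat_of_qcodeE ?muln_gt0 // /rat_of_qcode !natrD !natrM.
have H1 := qcode_den_neq0 r1; have H2 := qcode_den_neq0 r2.
by field; apply/andP.
Qed.

Lemma rat_of_qcode_mul r1 r2 :
  rat_of_qcode (qcode_mul r1 r2) = (rat_of_qcode r1 * rat_of_qcode r2)%R.
Proof.
rewrite /qcode_mul rat_of_qcodeE ?muln_gt0 // /rat_of_qcode !natrD !natrM.
have H1 := qcode_den_neq0 r1; have H2 := qcode_den_neq0 r2.
by field; apply/andP.
Qed.

Lemma rat_of_qcode_eq0 r : (rat_of_qcode r == 0%R) = (qcode_pos r == qcode_neg r).
Proof.
rewrite /rat_of_qcode mulf_eq0 invr_eq0 (negbTE (qcode_den_neq0 r)) orbF subr_eq0.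
by rewrite eqr_nat.
Qed.

Definition int_pos (z : int) := if z is Posz n then n else 0.
Definition int_neg (z : int) := if z is Negz n then n.+1 else 0.

Lemma int_pos_neg z : ((int_pos z)%:R - (int_neg z)%:R = z%:~R :> rat)%R.
Proof. by case: z => n /=; rewrite ?subr0 // NegzE mulrNz sub0r. Qed.

Definition qcode_of_rat (q : rat) := qcode (int_pos (numq q)) (int_neg (numq q)) `|denq q|%N.

Lemma qcode_of_ratK q : rat_of_qcode (qcode_of_rat q) = q.
Proof.
rewrite /qcode_of_rat rat_of_qcodeE; last by rewrite absz_gt0 denq_neq0.
rewrite int_pos_neg -[X in _ = X]divq_num_den; congr (_ / _)%R.
by rewrite -[in RHS]absz_denq.
Qed.

Lemma modn_succ d n : 0 < d -> n.+1 %% d = if (n %% d).+1 == d then 0 else (n %% d).+1.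
Proof.
move=> d_gt0; rewrite -addn1 -modnDml addn1; have := ltn_pmod n d_gt0.
by case: eqP => [->|NE] Hlt; rewrite ?modnn // modn_small //; lia.
Qed.

Lemma divn_succ d n : 0 < d -> n.+1 %/ d = if (n %% d).+1 == d then (n %/ d).+1 else n %/ d.
Proof.
move=> d_gt0; rewrite divnS // /dvdn modn_succ //.
by case: ((n %% d).+1 =P d).
Qed.

Lemma computable_modn d a F : 0 < d -> computable a F -> computable a (fun v => F v %% d).
Proof.
move=> d_gt0; apply: (@computable_primrec1 (modn^~ d) (fun _ r => if r.+1 == d then 0 else r.+1)).
- exact: mod0n.
- by move=> n; exact: modn_succ.
- by computable_auto.
Qed.

Lemma computable_divn d a F : 0 < d -> computable a F -> computable a (fun v => F v %/ d).
Proof.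
move=> d_gt0.
apply: (@computable_primrec1 (divn^~ d) (fun n q => if (n %% d).+1 == d then q.+1 else q)).
- exact: div0n.
- by move=> n; exact: divn_succ.
- by computable_auto; apply: computable_modn => //; computable_auto.
Qed.

Lemma computable_odd a F : computable a F -> computable a (fun v => odd (F v) : nat).
Proof.
apply: (@computable_primrec1 (fun n => odd n : nat) (fun _ b => 1 - b)) => //; last computable_auto.
by move=> n /=; case: (odd n).
Qed.

Lemma computable_half a F : computable a F -> computable a (fun v => (F v)./2).
Proof.
apply: (@computable_primrec1 half (fun n t => if odd n then t.+1 else t)) => //.
  by move=> n; rewrite -uphalfE uphalf_half; case: (odd n).
by computable_auto; apply: computable_odd; computable_auto.
Qed.

Lemma computable_qcode a P Q D : computable a P -> computable a Q -> computable a D ->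
  computable a (fun v => qcode (P v) (Q v) (D v)).
Proof. by move=> *; rewrite /qcode; computable_auto. Qed.

Lemma computable_qcode_add a F G :
  computable a F -> computable a G -> computable a (fun v => qcode_add (F v) (G v)).
Proof.
by move=> *; rewrite /qcode_add /qcode_pos /qcode_neg /qcode_den; apply: computable_qcode;
  computable_auto.
Qed.

Lemma computable_qcode_mul a F G :
  computable a F -> computable a G -> computable a (fun v => qcode_mul (F v) (G v)).
Proof.
by move=> *; rewrite /qcode_mul /qcode_pos /qcode_neg /qcode_den; apply: computable_qcode;
  computable_auto.
Qed.

(* Course-of-values recursion: [St] sees the coded table of all earlier values. *)
Fixpoint cov_table (St : seq nat -> nat) c v : seq nat :=
  if c is c'.+1 then St (c' :: code_seq (cov_table St c' v) :: v) :: cov_table St c' v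
  else [::].

Definition course_of_values St c v := St (c :: code_seq (cov_table St c v) :: v).

Definition cov_lookup c t j := code_nth (c.-1 - j) t.

Lemma cov_lookup_table St c v j :
  j < c -> cov_lookup c (code_seq (cov_table St c v)) j = course_of_values St j v.
Proof.
rewrite /cov_lookup code_nth_seq; elim: c => // c IH.
rewrite ltnS leq_eqVlt => /orP [/eqP ->|Hj] /=; first by rewrite subnn.
have -> : c - j = (c.-1 - j).+1 by lia.
exact: IH.
Qed.

Lemma computable_course_of_values a St :
  computable a.+2 St -> computable a.+1 (fun u => course_of_values St (head 0 u) (behead u)).
Proof.
move=> HS.
have HT : computable a.+1 (fun u => code_seq (cov_table St (head 0 u) (behead u))).
  apply: (@computable_ext _ _ (fun u => primrec (fun _ => 0)
    (fun w => (cpair (St (nth 0 w 0 :: nth 0 w 1 :: drop 3 w)) (nth 0 w 1)).+1) (head 0 u) u)).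
    by move=> u _; elim: (head 0 u) => //= n <-; case: u => //= y v; rewrite drop0.
  apply: computable_primrec; computable_auto.
  apply: (@computable_subst a.+3 a.+2 3 [:: fun w => nth 0 w 0; fun w => nth 0 w 1] St) => //.
    by rewrite subSS subSS subSS subn0.
  by constructor; [computable_auto | constructor; [computable_auto | constructor]].
apply: (@computable_ext _ _ (fun u => St (map (fun H => H u)
  [:: fun u => head 0 u; fun u => code_seq (cov_table St (head 0 u) (behead u))] ++ drop 1 u))).
  by move=> [|y v] //= _; rewrite drop0.
apply: (@computable_subst a.+1 a.+2 1 _ St) => //; first by rewrite subn1.
by constructor; [computable_auto | constructor; [exact: HT | constructor]].
Qed.

Lemma computable_cov_lookup a C T J : computable a C -> computable a T -> computable a J ->
  computable a (fun v => cov_lookup (C v) (T v) (J v)).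
Proof. by move=> *; rewrite /cov_lookup; computable_auto. Qed.

Ltac computable_hook ::= lazymatch goal with
  | |- computable _ (fun _ => code_nth _ _) => apply: computable_code_nth
  | |- computable _ (fun _ => cpair _ _) => apply: computable_cpair
  | |- computable _ (fun _ => unpair1 _) => apply: computable_unpair1
  | |- computable _ (fun _ => unpair2 _) => apply: computable_unpair2
  | |- computable _ (fun _ => tri _) => apply: computable_tri
  | |- computable _ (fun _ => qcode_add _ _) => apply: computable_qcode_add
  | |- computable _ (fun _ => qcode_mul _ _) => apply: computable_qcode_mul
  | |- computable _ (fun _ => qcode _ _ _) => apply: computable_qcode
  | |- computable _ (fun _ => _ %% 4) => apply: computable_modn; first done
  | |- computable _ (fun _ => _ %/ 4) => apply: computable_divn; first done
  | |- computable _ (fun _ => (_)./2) => apply: computable_half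
  | |- computable _ (fun _ => nat_of_bool (odd _)) => apply: computable_odd
  | |- computable _ (fun _ => cov_lookup _ _ _) => apply: computable_cov_lookup
  end.

(* Structural recursion on polynomial codes, for the four node kinds of [code_zpoly]. *)
Section CodeFold.
Variables (V : nat -> nat -> nat) (C : nat -> nat) (A M : nat -> nat -> nat).

Definition code_fold_step (u : seq nat) : nat :=
  if nth 0 u 0 %% 4 == 0 then V (nth 0 u 0 %/ 4) (nth 0 u 2)
  else if nth 0 u 0 %% 4 == 1 then C (nth 0 u 0 %/ 4)
  else if nth 0 u 0 %% 4 == 2 then
    A (cov_lookup (nth 0 u 0) (nth 0 u 1) (unpair1 (nth 0 u 0 %/ 4)))
      (cov_lookup (nth 0 u 0) (nth 0 u 1) (unpair2 (nth 0 u 0 %/ 4)))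
  else M (cov_lookup (nth 0 u 0) (nth 0 u 1) (unpair1 (nth 0 u 0 %/ 4)))
         (cov_lookup (nth 0 u 0) (nth 0 u 1) (unpair2 (nth 0 u 0 %/ 4))).

Definition code_fold c x := course_of_values code_fold_step c [:: x].

Lemma code_fold_PVar i x : code_fold (code_zpoly (PVar i)) x = V i x.
Proof.
rewrite /code_fold /course_of_values /code_fold_step /=.
have -> : (4 * i) %% 4 = 0 by lia.
by congr V; lia.
Qed.

Lemma code_fold_PConst z x : code_fold (code_zpoly (PConst z)) x = C (code_int z).
Proof.
rewrite /code_fold /course_of_values /code_fold_step /=.
have -> : (4 * code_int z + 1) %% 4 = 1 by lia.
by congr C; lia.
Qed.

Lemma code_fold_node k p q x : k < 2 ->
  course_of_values code_fold_step (4 * cpair (code_zpoly p) (code_zpoly q) + k.+2) [:: x] =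
  (if k == 0 then A else M) (code_fold (code_zpoly p) x) (code_fold (code_zpoly q) x).
Proof.
move=> Hk; set c := 4 * _ + _.
have Hmod : c %% 4 = k.+2 by rewrite /c; lia.
have Hdiv : c %/ 4 = cpair (code_zpoly p) (code_zpoly q) by rewrite /c; lia.
have Hp : code_zpoly p < c by have := leq_cpairl (code_zpoly p) (code_zpoly q); rewrite /c; lia.
have Hq : code_zpoly q < c by have := leq_cpairr (code_zpoly p) (code_zpoly q); rewrite /c; lia.
rewrite {1}/course_of_values /code_fold_step /= Hmod Hdiv unpair1_cpair unpair2_cpair.
by rewrite !cov_lookup_table // !eqSS; case: (k == 0).
Qed.

Lemma code_fold_PAdd p q x : code_fold (code_zpoly (PAdd p q)) x =
  A (code_fold (code_zpoly p) x) (code_fold (code_zpoly q) x).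
Proof. exact: (@code_fold_node 0). Qed.

Lemma code_fold_PMul p q x : code_fold (code_zpoly (PMul p q)) x =
  M (code_fold (code_zpoly p) x) (code_fold (code_zpoly q) x).
Proof. exact: (@code_fold_node 1). Qed.

Hypotheses (HV : computable 2 (fun u => V (nth 0 u 0) (nth 0 u 1)))
  (HC : computable 1 (fun u => C (nth 0 u 0)))
  (HA : computable 2 (fun u => A (nth 0 u 0) (nth 0 u 1)))
  (HM : computable 2 (fun u => M (nth 0 u 0) (nth 0 u 1))).

Lemma computable_code_fold a Cd X : computable a Cd -> computable a X ->
  computable a (fun v => code_fold (Cd v) (X v)).
Proof.
move=> HCd HX; apply: computable_comp2 HCd HX.
apply: (@computable_ext _ _ (fun u => course_of_values code_fold_step (head 0 u) (behead u))).
  by move=> [|c [|x [|y u]]].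
apply: computable_course_of_values; rewrite /code_fold_step.
apply: computable_if; first computable_auto.
  by apply: computable_comp2 HV _ _; computable_auto.
apply: computable_if; first computable_auto.
  by apply: computable_comp1 HC _; computable_auto.
by apply: computable_if; [|apply: computable_comp2 HA _ _ | apply: computable_comp2 HM _ _];
  computable_auto.
Qed.

End CodeFold.

Definition qcode_of_int_code k := if odd k then qcode 0 (k./2).+1 1 else qcode k./2 0 1.

(* [eval_code c xs] is a code of the value of the polynomial coded by [c] at the point
   whose coordinates have codes [code_nth i xs]. *)
Definition eval_code := code_fold code_nth qcode_of_int_code qcode_add qcode_mul.

Definition wf_code := code_fold (fun i n => i < n : nat) (fun _ => 1) muln muln.

Lemma rat_of_qcode_of_int_code z : rat_of_qcode (qcode_of_int_code (code_int z)) = (z%:~R)%R.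
Proof.
case: z => k /=; rewrite /qcode_of_int_code.
  by rewrite odd_double doubleK rat_of_qcodeE // subr0 divr1.
have H : k.*2.+1./2 = k by rewrite -uphalfE uphalf_double.
by rewrite H /= odd_double /= rat_of_qcodeE // sub0r divr1 NegzE mulrNz.
Qed.

Lemma eval_code_zpoly n (x : n.-tuple rat) xs p : zpoly_wf n p ->
  (forall i, i < n -> nth 0%R x i = rat_of_qcode (code_nth i xs)) ->
  rat_of_qcode (eval_code (code_zpoly p) xs) = zpoly_eval x p.
Proof.
move=> Hwf Hx; elim: p Hwf => [i|z|p IHp q IHq|p IHp q IHq] /= Hwf.
- by rewrite /eval_code code_fold_PVar Hx.
- by rewrite /eval_code code_fold_PConst rat_of_qcode_of_int_code.
- move/andP: Hwf => [/IHp Hp /IHq Hq].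
  by rewrite /eval_code code_fold_PAdd rat_of_qcode_add Hp Hq.
- move/andP: Hwf => [/IHp Hp /IHq Hq].
  by rewrite /eval_code code_fold_PMul rat_of_qcode_mul Hp Hq.
Qed.

Lemma wf_code_zpoly n p : wf_code (code_zpoly p) n = zpoly_wf n p.
Proof.
rewrite /wf_code; elim: p => [i|z|p IHp q IHq|p IHp q IHq].
- by rewrite code_fold_PVar.
- by rewrite code_fold_PConst.
- by rewrite code_fold_PAdd IHp IHq /=; case: (zpoly_wf n p); case: (zpoly_wf n q).
- by rewrite code_fold_PMul IHp IHq /=; case: (zpoly_wf n p); case: (zpoly_wf n q).
Qed.

Lemma computable_eval_code a C X :
  computable a C -> computable a X -> computable a (fun v => eval_code (C v) (X v)).
Proof.
apply: computable_code_fold; computable_auto.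
by rewrite /qcode_of_int_code; computable_auto.
Qed.

Lemma computable_wf_code a C X :
  computable a C -> computable a X -> computable a (fun v => wf_code (C v) (X v)).
Proof. by apply: computable_code_fold; computable_auto. Qed.

Lemma code_int_surj k : exists z, code_int z = k.
Proof.
case Ho: (odd k); [exists (Negz k./2) | exists (Posz k./2)] => /=;
  by rewrite -[RHS](odd_double_half k) Ho; lia.
Qed.

Lemma code_zpoly_surj c : exists p, code_zpoly p = c.
Proof.
elim: c {-2}c (leqnn c) => [|m IH] c Hc; first by exists (PVar 0) => /=; lia.
have Hnode : exists p q, code_zpoly p = unpair1 (c %/ 4) /\ code_zpoly q = unpair2 (c %/ 4).
  have E := cpair_unpair (c %/ 4).
  have := leq_cpairl (unpair1 (c %/ 4)) (unpair2 (c %/ 4)).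
  have := leq_cpairr (unpair1 (c %/ 4)) (unpair2 (c %/ 4)).
  rewrite E => G1 G2.
  have [p Hp] := IH (unpair1 (c %/ 4)) ltac:(lia).
  by have [q Hq] := IH (unpair2 (c %/ 4)) ltac:(lia); exists p, q.
have [p [q [Hp Hq]]] := Hnode; have E := cpair_unpair (c %/ 4).
have : c %% 4 < 4 by lia.
have : c = 4 * (c %/ 4) + c %% 4 by lia.
case: (c %% 4) => [|[|[|[|r]]]] Hc4 // _.
- by exists (PVar (c %/ 4)) => /=; lia.
- by have [z Hz] := code_int_surj (c %/ 4); exists (PConst z) => /=; rewrite Hz; lia.
- by exists (PAdd p q) => /=; rewrite Hp Hq E; lia.
- by exists (PMul p q) => /=; rewrite Hp Hq E; lia.
Qed.

Lemma code_zpoly_inj p q : code_zpoly p = code_zpoly q -> p = q.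
Proof.
elim: p q => [i|z|p IHp p' IHp'|p IHp p' IHp'] [j|w|q q'|q q'] /= E; try lia.
- by have -> : i = j by lia.
- have {E} : code_int z = code_int w by lia.
  by case: z => k; case: w => k' /= E; first [by have -> : k = k' by lia | exfalso; lia].
- have [/IHp -> /IHp' ->] // : code_zpoly p = code_zpoly q /\ code_zpoly p' = code_zpoly q'.
  by apply: cpair_inj; lia.
- have [/IHp -> /IHp' ->] // : code_zpoly p = code_zpoly q /\ code_zpoly p' = code_zpoly q'.
  by apply: cpair_inj; lia.
Qed.

Lemma code_poly_inj n p m q : code_poly n p = code_poly m q -> n = m /\ p = q.
Proof. by move=> /cpair_inj [-> /code_zpoly_inj ->]. Qed.

(** * Counting rational solutions *)

Definition tuple_of_fun n (f : nat -> rat) : n.-tuple rat :=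
  @Tuple n _ (mkseq f n) (introT eqP (size_mkseq f n)).

Lemma nth_tuple_of_fun n f i : i < n -> nth 0%R (tuple_of_fun n f) i = f i.
Proof. exact: nth_mkseq. Qed.

Lemma zpoly_eval_ext m m' (x : m.-tuple rat) (y : m'.-tuple rat) n p : zpoly_wf n p ->
  (forall i, i < n -> nth 0%R x i = nth 0%R y i) -> zpoly_eval x p = zpoly_eval y p.
Proof.
move=> Hw Hxy; elim: p Hw => [i|z|p IHp q IHq|p IHp q IHq] //= Hw; first exact: Hxy.
- by move/andP: Hw => [/IHp -> /IHq ->].
- by move/andP: Hw => [/IHp -> /IHq ->].
Qed.

Lemma zpoly_wf_leq n n' p : n <= n' -> zpoly_wf n p -> zpoly_wf n' p.
Proof.
move=> Hn; elim: p => [i|z|p IHp q IHq|p IHp q IHq] //=; first by move=> Hi; lia.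
- by move/andP => [/IHp -> /IHq ->].
- by move/andP => [/IHp -> /IHq ->].
Qed.

Definition extend_tuple n (x : n.-tuple rat) (t : rat) : n.+1.-tuple rat :=
  tuple_of_fun n.+1 (fun i => if i < n then nth 0%R x i else t).

Lemma zpoly_eval_extend n (x : n.-tuple rat) t p :
  zpoly_wf n p -> zpoly_eval (extend_tuple x t) p = zpoly_eval x p.
Proof.
move=> Hw; apply: (zpoly_eval_ext Hw) => i Hi.
by rewrite nth_tuple_of_fun ?Hi //; lia.
Qed.

(* Adding a dummy variable turns one solution into infinitely many. *)
Lemma finitely_many_lift_iff n p : zpoly_wf n p ->
  has_finitely_many_rat_solutions n.+1 p <-> ~ exists x : n.-tuple rat, zpoly_eval x p = 0%R.
Proof.
move=> Hw; split.
  move=> [s Hs] [x Hx].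
  pose Y (t : nat) := extend_tuple x t%:R.
  have HY t : Y t \in s by apply: Hs; rewrite /is_rat_solution zpoly_eval_extend.
  have Y_inj : injective Y.
    move=> t t' /(congr1 (fun y : n.+1.-tuple rat => nth 0%R y n)).
    by rewrite !nth_tuple_of_fun // ltnn => /eqP; rewrite eqr_nat => /eqP.
  have Hu : uniq (map Y (iota 0 (size s).+1)) by rewrite map_inj_uniq // iota_uniq.
  have /(uniq_leq_size Hu) : {subset map Y (iota 0 (size s).+1) <= s}.
    by move=> y /mapP [t _ ->].
  by rewrite size_map size_iota ltnn.
move=> Hno; exists [::] => y Hy; case: Hno.
exists (tuple_of_fun n (fun i => nth 0%R y i)); rewrite -[RHS]Hy.
by apply: (zpoly_eval_ext Hw) => i Hi; rewrite nth_tuple_of_fun.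
Qed.

Definition is_poly_code k := (0 < unpair1 k) && (wf_code (unpair2 k) (unpair1 k) == 1).

Lemma is_poly_code_poly n p : 0 < n -> zpoly_wf n p -> is_poly_code (code_poly n p).
Proof.
by move=> Hn Hw; rewrite /is_poly_code /code_poly unpair1_cpair unpair2_cpair Hn wf_code_zpoly Hw.
Qed.

Lemma is_poly_codeP k : is_poly_code k -> exists n p, [/\ 0 < n, zpoly_wf n p & k = code_poly n p].
Proof.
move=> /andP [Hn Hw]; have [p Hp] := code_zpoly_surj (unpair2 k).
exists (unpair1 k), p; split => //; last by rewrite /code_poly Hp cpair_unpair.
by move: Hw; rewrite -Hp wf_code_zpoly; case: (zpoly_wf _ p).
Qed.

Lemma HasRatSol_code_poly n p : 0 < n -> zpoly_wf n p ->
  HasRatSol (code_poly n p) <-> exists x : n.-tuple rat, zpoly_eval x p = 0%R.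
Proof.
move=> Hn Hw; split; last by move=> Hx; exists n, p.
by move=> [m [q [Hm Hwq /code_poly_inj [E1 E2] Hx]]]; subst.
Qed.

Lemma FinRatSol_code_poly n p : 0 < n -> zpoly_wf n p ->
  FinRatSol (code_poly n p) <-> has_finitely_many_rat_solutions n p.
Proof.
move=> Hn Hw; split; last by move=> Hx; exists n, p.
by move=> [m [q [Hm Hwq /code_poly_inj [E1 E2] Hx]]]; subst.
Qed.

(* A rational solution is coded by the list of codes of its coordinates. *)
Lemma HasRatSolE k : HasRatSol k <-> is_poly_code k /\
  exists xs, qcode_pos (eval_code (unpair2 k) xs) == qcode_neg (eval_code (unpair2 k) xs).
Proof.
split.
  move=> [n [p [Hn Hw -> [x Hx]]]]; split; first exact: is_poly_code_poly.
  exists (code_seq (map qcode_of_rat x)).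
  rewrite /code_poly unpair2_cpair -rat_of_qcode_eq0 (@eval_code_zpoly n x) // ?Hx //.
  by move=> i Hi; rewrite code_nth_seq (nth_map 0%R) ?size_tuple // qcode_of_ratK.
move=> [/is_poly_codeP [n [p [Hn Hw ->]]] [xs Hxs]].
apply/HasRatSol_code_poly => //; exists (tuple_of_fun n (fun i => rat_of_qcode (code_nth i xs))).
apply/eqP; move: Hxs; rewrite /code_poly unpair2_cpair -rat_of_qcode_eq0.
rewrite (@eval_code_zpoly n (tuple_of_fun n (fun i => rat_of_qcode (code_nth i xs)))) //.
by move=> i Hi; rewrite nth_tuple_of_fun.
Qed.

Lemma computable_is_poly_code a F :
  computable a F -> computable a (fun v => is_poly_code (F v) : nat).
Proof.
by move=> HF; rewrite /is_poly_code; computable_auto; apply: computable_wf_code; computable_auto.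
Qed.

Lemma sigma1_HasRatSol : sigma1 1 (fun v => HasRatSol (head 0 v)).
Proof.
pose b w := is_poly_code (nth 0 w 1) &&
  (qcode_pos (eval_code (unpair2 (nth 0 w 1)) (nth 0 w 0)) ==
   qcode_neg (eval_code (unpair2 (nth 0 w 1)) (nth 0 w 0))).
apply: (@sigma1_ext _ _ (fun v => exists xs, b (xs :: v))).
  move=> [|k [|y v]] //= _; rewrite HasRatSolE /b /=; split.
    by move=> [Hk [xs Hxs]]; exists xs; rewrite Hk.
  by move=> [xs /andP [Hk Hxs]]; split => //; exists xs.
apply: (@sigma1_exists _ b); apply: (@sigma1_bool _ _ b) => //.
rewrite /b /qcode_pos /qcode_neg; apply: computable_andb.
  by apply: computable_is_poly_code; computable_auto.
by computable_auto; apply: computable_eval_code; computable_auto.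
Qed.

Definition lift_code k := cpair (unpair1 k).+1 (unpair2 k).

Theorem recursive_HasRatSol_of_re_FinRatSol : re_set FinRatSol -> recursive_set HasRatSol.
Proof.
move=> Hre; apply: recursive_set_of_sigma1; first exact: sigma1_HasRatSol.
apply: (@sigma1_ext _ _ (fun v =>
  ~~ is_poly_code (head 0 v) \/ FinRatSol (head 0 [:: lift_code (head 0 v)]))).
  move=> v _ /=; set k := head 0 v.
  case Hk: (is_poly_code k); last by split => [_|_ /HasRatSolE []]; [left | rewrite Hk].
  have [n [p [Hn Hw Ek]]] := is_poly_codeP Hk.
  have -> : lift_code k = code_poly n.+1 p.
    by rewrite /lift_code Ek /code_poly unpair1_cpair unpair2_cpair.
  rewrite FinRatSol_code_poly // ?(zpoly_wf_leq _ Hw) // finitely_many_lift_iff //.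
  by rewrite Ek HasRatSol_code_poly //; split => [H|[//|H]]; [right|].
apply: sigma1_or.
  apply: (@sigma1_bool _ _ (fun v => ~~ is_poly_code (head 0 v))) => //.
  by apply: computable_negb; apply: computable_is_poly_code; computable_auto.
apply: (@sigma1_subst 1 1 _ [:: fun v => lift_code (head 0 v)] (sigma1_of_re_set Hre)) => //.
by constructor; [rewrite /lift_code; computable_auto | constructor].
Qed.

(** * Polynomials vanishing exactly on a finite set of rational points *)

Fixpoint iter_op (T : Type) (op : T -> T -> T) (b : T) m (F : nat -> T) : T :=
  if m is m'.+1 then op (iter_op op b m' F) (F m') else b.

Definition zsquare q := PMul q q.
Definition zsum := iter_op PAdd (PConst 0).
Definition zprod := iter_op PMul (PConst 1).

(* The integer [-numerator] of the rational number coded by [r]. *)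
Definition qcode_negnum r : int :=
  if qcode_pos r <= qcode_neg r then Posz (qcode_neg r - qcode_pos r)
  else Negz (qcode_pos r - qcode_neg r).-1.

Definition point_eq_poly j r :=
  PAdd (PMul (PConst (Posz (qcode_den r))) (PVar j)) (PConst (qcode_negnum r)).

Definition point_poly n a := zsum n (fun j => zsquare (point_eq_poly j (code_nth j a))).

(* The product runs over [i < L], which covers every entry of the list coded by [L]
   ([size_code_seq]); the surplus factors only add harmless extra points. *)
Definition points_poly n L := zprod L (fun i => point_poly n (code_nth i L)).

(* Its rational solutions are those of [p] (in the first [n] variables) outside the points
   listed in [L], each paired with the inverse of [points_poly n L] in the last variable. *)
Definition avoid_poly n p L :=
  PAdd (zsquare p) (zsquare (PAdd (PMul (points_poly n L) (PVar n)) (PConst (-1)))).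

Section Evaluation.
Variables (m : nat) (y : m.-tuple rat).

Lemma zsum_squares_ge0 k G : (0 <= zpoly_eval y (zsum k (fun j => zsquare (G j))))%R.
Proof. by elim: k => //= k IH; rewrite addr_ge0 // -expr2 sqr_ge0. Qed.

Lemma zsum_squares_eq0 k G : zpoly_eval y (zsum k (fun j => zsquare (G j))) = 0%R <->
  forall j, j < k -> zpoly_eval y (G j) = 0%R.
Proof.
elim: k => [|k IH] /=; first by split => // _ j.
split.
  move/eqP; rewrite paddr_eq0 ?zsum_squares_ge0 -?expr2 ?sqr_ge0 // => /andP [/eqP /IH H1].
  rewrite sqrf_eq0 => /eqP H2 j; rewrite ltnS leq_eqVlt => /orP [/eqP -> //|]; exact: H1.
move=> H; rewrite (proj2 IH); last by move=> j Hj; apply: H; lia.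
by rewrite H // mulr0 addr0.
Qed.

Lemma zprod_eq0 k F : zpoly_eval y (zprod k F) = 0%R <->
  exists2 i, i < k & zpoly_eval y (F i) = 0%R.
Proof.
elim: k => [|k IH] /=; first by split => [/eqP|[]]; rewrite ?oner_eq0.
split.
  move/eqP; rewrite mulf_eq0 => /orP [/eqP /IH [i Hi Hi']|/eqP H]; last by exists k.
  by exists i => //; lia.
move=> [i]; rewrite ltnS leq_eqVlt => /orP [/eqP -> ->|Hi Hi']; first by rewrite mulr0.
by rewrite (proj2 IH) ?mul0r //; exists i.
Qed.

Lemma qcode_negnumE r : ((qcode_negnum r)%:~R = (qcode_neg r)%:R - (qcode_pos r)%:R :> rat)%R.
Proof.
rewrite /qcode_negnum; have -> : forall a b : nat,
  (if a <= b then Posz (b - a) else Negz (a - b).-1) = (b%:Z - a%:Z)%R.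
  by move=> a b; case: leqP => H; rewrite ?NegzE; lia.
by rewrite intrB.
Qed.

Lemma point_eq_poly_eq0 j r :
  zpoly_eval y (point_eq_poly j r) = 0%R <-> nth 0%R y j = rat_of_qcode r.
Proof.
rewrite /= qcode_negnumE /rat_of_qcode; have Hd := qcode_den_neq0 r.
split => H.
  apply: (mulfI Hd); rewrite mulrCA divff // mulr1.
  by move/eqP: H; rewrite addr_eq0 => /eqP ->; rewrite opprB.
by rewrite H pmulrn; field.
Qed.

Lemma point_poly_eq0 n a : zpoly_eval y (point_poly n a) = 0%R <->
  forall j, j < n -> nth 0%R y j = rat_of_qcode (code_nth j a).
Proof. by rewrite zsum_squares_eq0; split => H j Hj; apply/point_eq_poly_eq0; apply: H. Qed.

Lemma points_poly_eq0 n L : zpoly_eval y (points_poly n L) = 0%R <->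
  exists2 i, i < L & forall j, j < n -> nth 0%R y j = rat_of_qcode (code_nth j (code_nth i L)).
Proof. by rewrite zprod_eq0; split => -[i Hi /point_poly_eq0 H]; exists i. Qed.

Lemma avoid_poly_eq0 n p L : zpoly_eval y (avoid_poly n p L) = 0%R <->
  zpoly_eval y p = 0%R /\ (zpoly_eval y (points_poly n L) * nth 0%R y n = 1)%R.
Proof.
set A := zpoly_eval y p; set B := (zpoly_eval y (points_poly n L) * nth 0%R y n)%R.
have -> : zpoly_eval y (avoid_poly n p L) = (A ^+ 2 + (B - 1) ^+ 2)%R by rewrite /= !expr2.
split => [/eqP|[-> ->]]; last by ring.
by rewrite paddr_eq0 ?sqr_ge0 // !sqrf_eq0 subr_eq0 => /andP [/eqP -> /eqP ->].
Qed.

End Evaluation.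

Lemma zpoly_wf_iter_op op b n k F :
  (forall p q, zpoly_wf n (op p q) = zpoly_wf n p && zpoly_wf n q) -> zpoly_wf n b ->
  (forall j, j < k -> zpoly_wf n (F j)) -> zpoly_wf n (iter_op op b k F).
Proof.
move=> Hop Hb; elim: k => //= k IH H; rewrite Hop IH ?H //.
by move=> j Hj; apply: H; lia.
Qed.

Lemma zpoly_wf_points_poly n L : zpoly_wf n (points_poly n L).
Proof.
apply: zpoly_wf_iter_op => // i _; apply: zpoly_wf_iter_op => // j Hj.
by rewrite /= Hj.
Qed.

Lemma zpoly_wf_avoid_poly n p L : zpoly_wf n p -> zpoly_wf n.+1 (avoid_poly n p L).
Proof.
move=> Hw; rewrite /avoid_poly /= !(zpoly_wf_leq _ Hw) //.
rewrite ?(zpoly_wf_leq _ (zpoly_wf_points_poly n L)) //.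
by rewrite ltnSn.
Qed.

Lemma avoid_poly_no_root_iff n p L : zpoly_wf n p ->
  (~ exists y : n.+1.-tuple rat, zpoly_eval y (avoid_poly n p L) = 0%R) <->
  forall x : n.-tuple rat, zpoly_eval x p = 0%R ->
    exists2 i, i < L & forall j, j < n -> nth 0%R x j = rat_of_qcode (code_nth j (code_nth i L)).
Proof.
move=> Hw.
have Hpts (x : n.-tuple rat) t :
    zpoly_eval (extend_tuple x t) (points_poly n L) = zpoly_eval x (points_poly n L).
  exact/zpoly_eval_extend/zpoly_wf_points_poly.
split.
  move=> Hno x Hx; apply: NNPP => Hns; apply: Hno.
  have Hc : zpoly_eval x (points_poly n L) != 0%R.
    by apply/negP => /eqP /points_poly_eq0 [i Hi Hj]; apply: Hns; exists i.
  exists (extend_tuple x (zpoly_eval x (points_poly n L))^-1); apply/avoid_poly_eq0.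
  by rewrite zpoly_eval_extend // Hpts nth_tuple_of_fun // ltnn divff.
move=> H [y /avoid_poly_eq0 [Hy HP]].
pose x := tuple_of_fun n (fun j => nth 0%R y j).
have Hxy : forall j, j < n -> nth 0%R x j = nth 0%R y j by move=> j Hj; rewrite nth_tuple_of_fun.
have [i Hi Hj] : exists2 i, i < L &
    forall j, j < n -> nth 0%R x j = rat_of_qcode (code_nth j (code_nth i L)).
  by apply: H; rewrite (zpoly_eval_ext Hw Hxy).
have : zpoly_eval y (points_poly n L) = 0%R.
  by apply/points_poly_eq0; exists i => // j Hjn; rewrite -Hj // Hxy.
by move=> E; move: HP; rewrite E mul0r => /eqP; rewrite eq_sym oner_eq0.
Qed.

(* A finite solution set is listed by a single natural number [L], and conversely. *)
Lemma finitely_many_iff_avoid_poly n p : 0 < n -> zpoly_wf n p ->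
  has_finitely_many_rat_solutions n p <->
  exists L, ~ HasRatSol (code_poly n.+1 (avoid_poly n p L)).
Proof.
move=> Hn Hw; split.
  move=> [s Hs]; exists (code_seq (map (fun x : n.-tuple rat => code_seq (map qcode_of_rat x)) s)).
  rewrite HasRatSol_code_poly ?zpoly_wf_avoid_poly // avoid_poly_no_root_iff // => x /Hs Hx.
  exists (index x s).
    by apply: leq_trans (size_code_seq _); rewrite size_map index_mem.
  move=> j Hj; rewrite code_nth_seq (nth_map x) ?index_mem // nth_index // code_nth_seq.
  by rewrite (nth_map 0%R) ?size_tuple // qcode_of_ratK.
move=> [L]; rewrite HasRatSol_code_poly ?zpoly_wf_avoid_poly // avoid_poly_no_root_iff // => H.
exists [seq tuple_of_fun n (fun j => rat_of_qcode (code_nth j (code_nth i L))) | i <- iota 0 L].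
move=> x /H [i Hi Hj].
have -> : x = tuple_of_fun n (fun j => rat_of_qcode (code_nth j (code_nth i L))).
  apply: val_inj; apply: (@eq_from_nth _ 0%R); first by rewrite /= !size_tuple.
  by move=> j; rewrite size_tuple => Hjn; rewrite nth_tuple_of_fun // Hj.
by apply: map_f; rewrite mem_iota.
Qed.

Lemma iter_op_morph (T U : Type) (f : T -> U) opT opU b m F :
  (forall x y, f (opT x y) = opU (f x) (f y)) ->
  f (iter_op opT b m F) = iter_op opU (f b) m (fun j => f (F j)).
Proof. by move=> Hf; elim: m => //= m <-. Qed.

Lemma computable_iter_op a op b N G :
  computable 2 (fun u => op (nth 0 u 0) (nth 0 u 1)) -> computable a.+1 G -> computable a N ->
  computable a (fun v => iter_op op b (N v) (fun j => G (j :: v))).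
Proof.
move=> Hop HG HN.
apply: (@computable_ext _ _ (fun v => primrec (fun _ => b)
          (fun u => op (nth 0 u 1) (G (nth 0 u 0 :: drop 2 u))) (N v) v)).
  by move=> v _; elim: (N v) => //= m ->; rewrite drop0.
apply: computable_primrec => //; first exact: computable_const.
apply: computable_comp2 Hop _ _; first computable_auto.
apply: (@computable_ext _ _
  (fun u => G (map (fun H => H u) [:: fun u => nth 0 u 0] ++ drop 2 u))) => //.
apply: computable_subst HG _; first by rewrite subSS subSS subn0.
by constructor; [computable_auto | constructor].
Qed.

Definition code_PAdd a b := 4 * cpair a b + 2.
Definition code_PMul a b := 4 * cpair a b + 3.

Lemma computable_code_PAdd : computable 2 (fun u => code_PAdd (nth 0 u 0) (nth 0 u 1)).
Proof. by rewrite /code_PAdd; computable_auto. Qed.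

Lemma computable_code_PMul : computable 2 (fun u => code_PMul (nth 0 u 0) (nth 0 u 1)).
Proof. by rewrite /code_PMul; computable_auto. Qed.

Lemma computable_code_int_qcode_negnum a R :
  computable a R -> computable a (fun v => code_int (qcode_negnum (R v))).
Proof.
move=> HR; apply: (@computable_ext _ _ (fun v =>
  if qcode_pos (R v) <= qcode_neg (R v) then (qcode_neg (R v) - qcode_pos (R v)).*2
  else ((qcode_pos (R v) - qcode_neg (R v)).-1).*2.+1)).
  by move=> v _; rewrite /qcode_negnum; case: leqP.
by rewrite /qcode_pos /qcode_neg; computable_auto.
Qed.

Lemma computable_code_point_eq_poly a J R : computable a J -> computable a R ->
  computable a (fun v => code_zpoly (point_eq_poly (J v) (R v))).
Proof.
move=> HJ HR; apply: computable_comp2 computable_code_PAdd _ _.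
  by apply: computable_comp2 computable_code_PMul _ _; rewrite /= /qcode_den; computable_auto.
by rewrite /=; computable_auto; exact: computable_code_int_qcode_negnum.
Qed.

Lemma computable_code_point_poly a N A : computable a N -> computable a A ->
  computable a (fun v => code_zpoly (point_poly (N v) (A v))).
Proof.
move=> HN HA; apply: (@computable_comp2 a (fun n A => code_zpoly (point_poly n A))) HN HA.
pose G w := code_zpoly (zsquare (point_eq_poly (nth 0 w 0) (code_nth (nth 0 w 0) (nth 0 w 2)))).
apply: (@computable_ext _ _ (fun u => iter_op code_PAdd 1 (nth 0 u 0) (fun j => G (j :: u)))).
  by move=> u _; rewrite /point_poly /zsum (@iter_op_morph _ _ code_zpoly PAdd code_PAdd).
apply: computable_iter_op computable_code_PAdd _ _; last computable_auto.
apply: computable_comp2 computable_code_PMul _ _;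
  by apply: computable_code_point_eq_poly; computable_auto.
Qed.

Lemma computable_code_points_poly a N L : computable a N -> computable a L ->
  computable a (fun v => code_zpoly (points_poly (N v) (L v))).
Proof.
move=> HN HL; apply: (@computable_comp2 a (fun n L => code_zpoly (points_poly n L))) HN HL.
pose G w := code_zpoly (point_poly (nth 0 w 1) (code_nth (nth 0 w 0) (nth 0 w 2))).
apply: (@computable_ext _ _ (fun u => iter_op code_PMul 9 (nth 0 u 1) (fun i => G (i :: u)))).
  by move=> u _; rewrite /points_poly /zprod (@iter_op_morph _ _ code_zpoly PMul code_PMul).
apply: computable_iter_op computable_code_PMul _ _; last computable_auto.
by apply: computable_code_point_poly; computable_auto.
Qed.

Definition code_avoid_poly n c L :=
  code_PAdd (code_PMul c c)
    (code_PMul (code_PAdd (code_PMul (code_zpoly (points_poly n L)) (code_zpoly (PVar n)))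
                          (code_zpoly (PConst (-1))))
               (code_PAdd (code_PMul (code_zpoly (points_poly n L)) (code_zpoly (PVar n)))
                          (code_zpoly (PConst (-1))))).

Lemma code_avoid_polyE n p L : code_avoid_poly n (code_zpoly p) L = code_zpoly (avoid_poly n p L).
Proof. by []. Qed.

Lemma computable_code_avoid_poly a N C L :
  computable a N -> computable a C -> computable a L ->
  computable a (fun v => code_avoid_poly (N v) (C v) (L v)).
Proof.
move=> HN HC HL; have HP := computable_code_points_poly HN HL.
by rewrite /code_avoid_poly /code_PAdd /code_PMul /=; computable_auto.
Qed.

(** * The equivalence *)

Definition indicator (S : nat -> Prop) k := if excluded_middle_informative (S k) then 1 else 0.

Lemma indicator_eq0 S k : indicator S k = 0 <-> ~ S k.
Proof. by rewrite /indicator; case: excluded_middle_informative. Qed.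

Lemma computable_indicator S a F :
  recursive_set S -> computable a F -> computable a (fun v => indicator S (F v)).
Proof.
move=> [f Hf]; apply: computable_comp1; exists f => -[|k [|x v]] //= _.
by rewrite /indicator; case: excluded_middle_informative => H; case: (Hf k) => -[].
Qed.

Lemma FinRatSolE k : FinRatSol k <-> is_poly_code k /\
  exists L, ~ HasRatSol (cpair (unpair1 k).+1 (code_avoid_poly (unpair1 k) (unpair2 k) L)).
Proof.
split.
  move=> [n [p [Hn Hw -> Hfin]]]; split; first exact: is_poly_code_poly.
  have [L HL] := proj1 (finitely_many_iff_avoid_poly Hn Hw) Hfin; exists L.
  by rewrite /code_poly unpair1_cpair unpair2_cpair code_avoid_polyE.
move=> [/is_poly_codeP [n [p [Hn Hw ->]]] [L HL]].
apply/FinRatSol_code_poly => //; apply/(finitely_many_iff_avoid_poly Hn Hw); exists L.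
by move: HL; rewrite /code_poly unpair1_cpair unpair2_cpair code_avoid_polyE.
Qed.

Theorem re_FinRatSol_of_recursive_HasRatSol : recursive_set HasRatSol -> re_set FinRatSol.
Proof.
move=> Hrec; apply: re_set_of_sigma1.
pose G w := indicator HasRatSol
  (cpair (unpair1 (nth 0 w 1)).+1
         (code_avoid_poly (unpair1 (nth 0 w 1)) (unpair2 (nth 0 w 1)) (nth 0 w 0))).
apply: (@sigma1_ext _ _ (fun v => is_poly_code (head 0 v) /\ exists L, G (L :: v) = 0)).
  move=> v _; rewrite FinRatSolE.
  by split => -[H1 [L HL]]; split => //; exists L; exact/indicator_eq0.
apply: sigma1_and.
  apply: (@sigma1_bool _ _ (fun v => is_poly_code (head 0 v))) => //.
  by apply: computable_is_poly_code; computable_auto.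
apply: (@sigma1_exists _ (fun w => G w = 0)); apply: (@sigma1_computable _ _ G) => //.
apply: computable_indicator => //; apply: computable_cpair; first computable_auto.
by apply: computable_code_avoid_poly; computable_auto.
Qed.

Theorem mainTheorem13 :
  (recursive_set HasRatSol <-> re_set FinRatSol) /\
  (~ recursive_set HasRatSol <-> ~ re_set FinRatSol).
Proof.
have E : recursive_set HasRatSol <-> re_set FinRatSol.
  split; [exact: re_FinRatSol_of_recursive_HasRatSol | exact: recursive_HasRatSol_of_re_FinRatSol].
by split => //; rewrite E.
Qed.
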